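(* Let $m,k\in\mathbb{N}$ and let $\beta\in\mathbb{C}$ with $\beta\notin\mathbb{Z}_0^-$ and $\frac{\beta}{2}-m\notin\mathbb{Z}_0^-$. Then \[ {}_3F_2\left[\begin{array}{r} -2m-1,\ \beta,\ -m-k-\tfrac{1}{2};\\ -2m-2k-1,\ \tfrac{\beta}{2}-m;\end{array}1\right]_{2m+1}=0. \]
   Context: $\mathbb{N}=\{1,2,3,\dots\}$, $\mathbb{Z}_0^-=\{0,-1,-2,\dots\}$. For $a\in\mathbb{C}$ and $n\in\mathbb{N}_0$, $(a)_0=1$ and $(a)_n=a(a+1)\cdots(a+n-1)$. For $N\in\mathbb{N}_0$, ${}_3F_2\left[\begin{array}{r} a_1,a_2,a_3;\\ b_1,b_2;\end{array}z\right]_N=\sum_{n=0}^{N}\frac{(a_1)_n(a_2)_n(a_3)_n}{(b_1)_n(b_2)_n}\frac{z^n}{n!}$ (the sum of the first $N+1$ terms), defined whenever $(b_1)_n(b_2)_n\neq0$ for $0\le n\le N$. *)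

(* complex numbers are R[i] (mathcomp-real-closed) over an
   arbitrary realType R (e.g. Stdlib's R), i.e. the complex field C. *)
From mathcomp Require Import all_boot all_algebra complex.
From mathcomp Require Import reals.
Set Implicit Arguments. Unset Strict Implicit. Unset Printing Implicit Defensive.
Import GRing.Theory Num.Theory.
Local Open Scope ring_scope.

Definition poch {F : pzRingType} (a : F) (n : nat) : F :=
  \prod_(i < n) (a + i%:R).

Definition F32_trunc {F : fieldType} (a1 a2 a3 b1 b2 z : F) (N : nat) : F :=
  \sum_(n < N.+1)
    (poch a1 n * poch a2 n * poch a3 n) / (poch b1 n * poch b2 n)
      * z ^+ n / (n`!)%:R.

Definition in_Z0minus {F : pzRingType} (x : F) : Prop :=
  exists n : nat, x = - n%:R.

(* Put c = -m-k-1/2, so that the lower parameter -2m-2k-1 is 2c, and N = 2m+1.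
   Multiplying the truncated series by (beta/2-m)_N gives P(beta), where
     P(x) = sum_(n <= N) (-1)^n C(N,n) (c)_n/(2c)_n (x)_n (x/2-m+n)_(N-n)
   is a polynomial of degree at most N. Every term of P vanishes at x = -2j
   for j <= m. At x = 2c+2i with i <= m and d = m-i, the identities
     (c)_n (c-d+n)_(N-n) = (c)_(N-d) (c-d+n)_d,
     (2c+2i)_n / (2c)_n = (2c+n)_(2i) / (2c)_(2i)
   turn P(2c+2i) into a multiple of sum_n (-1)^n C(N,n) Q(n) with
   deg Q = m+i < N: an N-th finite difference of Q, hence 0. Since 2c is an
   odd negative integer these 2m+2 roots are distinct, so P = 0. *)

From mathcomp Require Import all_boot all_algebra complex.
From mathcomp Require Import reals.
From mathcomp Require Import ring zify.

Set Implicit Arguments.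
Unset Strict Implicit.
Unset Printing Implicit Defensive.
Import GRing.Theory Num.Theory.
Local Open Scope ring_scope.

Section Pochhammer.
Variable R : comPzRingType.
Implicit Types a : R.

Lemma pochS a n : poch a n.+1 = poch a n * (a + n%:R).
Proof. by rewrite /poch big_ord_recr. Qed.

Lemma pochD a n p : poch a (n + p) = poch a n * poch (a + n%:R) p.
Proof.
rewrite /poch big_split_ord /=; congr (_ * _); apply: eq_bigr => i _.
by rewrite natrD addrA.
Qed.

Lemma poch_opp_nat N n : poch (- N%:R : R) n = (-1) ^+ n * (N ^_ n)%:R.
Proof.
elim: n => [|n IH]; first by rewrite /poch big_ord0 expr0 mul1r.
rewrite pochS IH ffactnSr natrM exprS.
have [le_nN|lt_Nn] := leqP n N; first by rewrite natrB //; ring.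
by rewrite ffact_small // !(mul0r, mulr0).
Qed.

Lemma poch_exchange a N n d : (n <= N)%N -> (d <= N)%N ->
  poch a n * poch (a - d%:R + n%:R) (N - n) =
  poch a (N - d) * poch (a - d%:R + n%:R) d.
Proof.
move=> le_nN le_dN; set b := a - d%:R + n%:R.
have [le_dn|lt_nd] := leqP d n.
  have -> : poch a n = poch a (n - d + d) by rewrite subnK.
  have -> : poch a (N - d) = poch a (n - d + (N - n)) by congr poch; lia.
  have -> : b = a + (n - d)%:R by rewrite /b natrB //; ring.
  by rewrite !pochD; ring.
have [le_ndN|lt_N_nd] := leqP (n + d) N.
  have -> : poch b (N - n) = poch b (d + (N - n - d)) by congr poch; lia.
  have -> : poch a (N - d) = poch a (n + (N - n - d)) by congr poch; lia.
  rewrite !pochD; have -> : b + d%:R = a + n%:R by rewrite /b; ring.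
  ring.
have -> : poch a n = poch a (N - d + (n + d - N)) by congr poch; lia.
have -> : poch b d = poch b (N - n + (n + d - N)) by congr poch; lia.
rewrite !pochD.
have -> : b + (N - n)%:R = a + (N - d)%:R by rewrite /b !natrB //; ring.
ring.
Qed.

End Pochhammer.

Section PochhammerIdomain.
Variable R : idomainType.
Implicit Types (a : R) (q : {poly R}).

Lemma poch_eq0P a n :
  reflect (exists2 t, (t < n)%N & a + t%:R = 0) (poch a n == 0).
Proof.
apply: (iffP (prodf_eq0 _ _)) => [[t _ /eqP]|[t lt_tn a_t0]]; first by exists t.
by exists (Ordinal lt_tn); last apply/eqP.
Qed.

Lemma poch_neq0 a n : ~ in_Z0minus a -> poch a n != 0.
Proof.
move=> a_notZ0; apply/poch_eq0P => -[t _ a_t0]; apply: a_notZ0; exists t.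
by apply/eqP; rewrite -subr_eq0 opprK a_t0.
Qed.

Definition pochX n : {poly R} := \prod_(i < n) ('X + i%:R%:P).

Lemma horner_pochX n x : (pochX n).[x] = poch x n.
Proof.
by rewrite /pochX horner_prod; apply: eq_bigr => i _; rewrite !hornerE.
Qed.

Lemma size_pochX n : size (pochX n) = n.+1.
Proof.
rewrite /pochX size_prod => [|i _]; last by rewrite -size_poly_eq0 size_XaddC.
rewrite (eq_bigr (fun=> 2%N)) => [|i _]; last exact: size_XaddC.
by rewrite sum_nat_const card_ord; lia.
Qed.

Lemma size_pochX_comp n q :
  (size q <= 2)%N -> (size (pochX n \Po q) <= n.+1)%N.
Proof.
move=> le_q2; apply: leq_trans (size_comp_poly_leq _ _) _.
rewrite size_pochX /=.
by rewrite ltnS -[leqRHS]muln1 leq_mul2l -subn1 leq_subLR add1n le_q2 orbT.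
Qed.

End PochhammerIdomain.

Arguments pochX {R} n.

Lemma poch_ratio (F : fieldType) (a : F) n p : poch a n != 0 -> poch a p != 0 ->
  poch (a + p%:R) n / poch a n = poch (a + n%:R) p / poch a p.
Proof.
move=> an_neq0 ap_neq0; apply/eqP; rewrite eqr_div // mulrC -pochD.
by rewrite mulrC -pochD addnC.
Qed.

Lemma alt_binomial_sumS (R : comPzRingType) (f : nat -> R) N :
  \sum_(n < N.+2) (-1) ^+ n * 'C(N.+1, n)%:R * f n =
  - \sum_(n < N.+1) (-1) ^+ n * 'C(N, n)%:R * (f n.+1 - f n).
Proof.
pose g n := (-1) ^+ n * 'C(N, n)%:R * f n.
have g_last : g N.+1 = 0 by rewrite /g bin_small // mulr0 mul0r.
rewrite big_ord_recl (eq_bigr (fun i : 'I_N.+1 =>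
  g i.+1 - (-1) ^+ i * 'C(N, i)%:R * f i.+1)); last first.
  by move=> i _; rewrite /g lift0 binS natrD exprS; ring.
rewrite sumrB addrA.
have -> : (-1) ^+ 0 * 'C(N.+1, 0)%:R * f 0 + \sum_(i < N.+1) g i.+1 =
          \sum_(i < N.+2) g i.
  by rewrite [RHS]big_ord_recl /g !bin0.
rewrite big_ord_recr /= g_last addr0.
by rewrite /g -sumrB -sumrN; apply: eq_bigr => i _; ring.
Qed.

Section FiniteDifferences.
Variable R : idomainType.
Implicit Types p : {poly R}.

Definition fdiff p := p \Po ('X + 1%:P) - p.

Lemma horner_fdiff p x : (fdiff p).[x] = p.[x + 1] - p.[x].
Proof. by rewrite /fdiff hornerD hornerN horner_comp !hornerE. Qed.

Lemma size_fdiff p N : (size p <= N.+1)%N -> (size (fdiff p) <= N)%N.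
Proof.
move=> le_pN; set q := p \Po ('X + 1%:P).
have size_q : size q = size p by rewrite size_comp_poly2 // size_XaddC.
have lead_q : lead_coef q = lead_coef p.
  by rewrite lead_coef_comp ?size_XaddC // lead_coefXaddC expr1n mulr1.
apply/leq_sizeP => j le_Nj; rewrite coefB.
have [lt_jp|le_pj] := ltnP j (size p); last first.
  by rewrite !nth_default ?subrr ?size_q.
have -> : j = (size p).-1 by lia.
by rewrite -size_q -lead_coefE lead_q size_q -lead_coefE subrr.
Qed.

Lemma alt_binomial_sum_poly_eq0 p N : (size p <= N)%N ->
  \sum_(n < N.+1) (-1) ^+ n * 'C(N, n)%:R * p.[n%:R] = 0.
Proof.
elim: N p => [|N IH] p le_pN.
  move: le_pN; rewrite size_poly_leq0 => /eqP->.
  by rewrite big1 // => i; rewrite horner0 mulr0.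
rewrite (@alt_binomial_sumS _ (fun n => p.[n%:R])).
rewrite (eq_bigr (fun n : 'I_N.+1 =>
  (-1) ^+ n * 'C(N, n)%:R * (fdiff p).[n%:R])).
  by rewrite IH ?oppr0 ?size_fdiff.
by move=> n _; rewrite horner_fdiff natr1.
Qed.

End FiniteDifferences.

Section F32Numerator.
Variables (F : numFieldType) (m : nat) (c : F).
Local Notation N := (2 * m).+1.

Definition F32_numer_coef n : F :=
  (-1) ^+ n * 'C(N, n)%:R * poch c n / poch (2 * c) n.

Definition F32_numer : {poly F} :=
  \sum_(n < N.+1) F32_numer_coef n *:
    (pochX n * (pochX (N - n) \Po (2^-1 *: 'X + (n%:R - m%:R)%:P))).

Lemma horner_F32_numer x : F32_numer.[x] = \sum_(n < N.+1)
  F32_numer_coef n * (poch x n * poch (x / 2 - m%:R + n%:R) (N - n)).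
Proof.
rewrite horner_sum; apply: eq_bigr => n _.
rewrite hornerZ hornerM horner_comp !horner_pochX.
rewrite hornerD hornerZ hornerX hornerC.
by congr (_ * (_ * poch _ _)); ring.
Qed.

Lemma size_F32_numer : (size F32_numer <= N.+1)%N.
Proof.
apply: leq_trans (size_sum _ _ _) _; apply/bigmax_leqP => n _.
apply: leq_trans (size_scale_leq _ _) _; apply: leq_trans (size_polyMleq _ _) _.
have size_lin : (size (2^-1 *: 'X + (n%:R - m%:R)%:P : {poly F})%R <= 2)%N.
  apply: leq_trans (size_polyD _ _) _; rewrite geq_max size_polyC.
  by rewrite (leq_trans (size_scale_leq _ _)) ?size_polyX //; case: (_ != 0).
have := size_pochX_comp (N - n) size_lin; rewrite size_pochX.
by move: (size _) (ltn_ord n) => s; lia.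
Qed.

Lemma F32_numer_root_even j : (j <= m)%N -> F32_numer.[- (2 * j)%:R] = 0.
Proof.
move=> le_jm; rewrite horner_F32_numer big1 // => n _.
have lt_nN := ltn_ord n.
have [le_n_jm|lt_jm_n] := leqP n (j + m).
  rewrite (eqP (_ : poch _ (N - n) == 0)) ?mulr0 //.
  apply/poch_eq0P; exists (j + m - n)%N; first lia.
  by rewrite natrB // natrD natrM; field.
rewrite (eqP (_ : poch _ n == 0)) ?mul0r ?mulr0 //.
by apply/poch_eq0P; exists (2 * j)%N; [lia | rewrite addNr].
Qed.

Section OddRoots.
Variable q : nat.
Hypotheses (lt_mq : (m < q)%N) (two_c : 2 * c = - ((2 * q).+1)%:R).

Lemma poch_two_c_neq0 n : (n <= N)%N -> poch (2 * c) n != 0.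
Proof.
move=> le_nN; apply/poch_eq0P => -[t lt_tn /eqP].
by rewrite two_c addrC subr_eq0 eqr_nat => /eqP; lia.
Qed.

Lemma F32_numer_root_odd i : (i <= m)%N -> F32_numer.[2 * c + (2 * i)%:R] = 0.
Proof.
move=> le_im; pose d := (m - i)%N.
pose Q : {poly F} :=
  (pochX d \Po ('X + (c - d%:R)%:P)) * (pochX (2 * i) \Po ('X + (2 * c)%:P)).
have size_Q : (size Q <= N)%N.
  apply: leq_trans (size_polyMleq _ _) _.
  have := size_pochX_comp d (eq_leq (size_XaddC (c - d%:R))).
  have := size_pochX_comp (2 * i) (eq_leq (size_XaddC (2 * c))).
  by rewrite /d; move: (size _) (size _) => s t; lia.
have Q_nat n :
    Q.[n%:R] = poch (c - d%:R + n%:R) d * poch (2 * c + n%:R) (2 * i).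
  rewrite hornerM !horner_comp !horner_pochX !hornerD !hornerX !hornerC.
  by rewrite !(addrC n%:R).
rewrite horner_F32_numer.
transitivity (poch c (N - d) / poch (2 * c) (2 * i) *
  \sum_(n < N.+1) (-1) ^+ n * 'C(N, n)%:R * Q.[n%:R]); last first.
  by rewrite alt_binomial_sum_poly_eq0 ?mulr0.
rewrite mulr_sumr; apply: eq_bigr => n _.
have le_nN : (n <= N)%N by rewrite -ltnS.
have -> : (2 * c + (2 * i)%:R) / 2 - m%:R + n%:R = c - d%:R + n%:R.
  by rewrite /d natrB // natrM; field.
rewrite Q_nat /F32_numer_coef; set s := (-1) ^+ n * 'C(N, n)%:R.
transitivity (s * (poch c n * poch (c - d%:R + n%:R) (N - n)) *
  (poch (2 * c + (2 * i)%:R) n / poch (2 * c) n)); first by ring.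
have le_2i_N : (2 * i <= N)%N by lia.
have le_dN : (d <= N)%N by rewrite /d; lia.
rewrite poch_exchange // poch_ratio ?poch_two_c_neq0 //; ring.
Qed.

Lemma F32_numer_eq0 : F32_numer = 0.
Proof.
pose evens := [seq - (2 * j)%:R | j <- iota 0 m.+1] : seq F.
pose odds := [seq 2 * c + (2 * i)%:R | i <- iota 0 m.+1].
apply: (@roots_geq_poly_eq0 _ _ (evens ++ odds)) => //.
- rewrite all_cat; apply/andP; split; apply/allP => x /mapP[j];
    rewrite mem_iota => /andP[_ lt_j] ->; apply/eqP.
    by apply: F32_numer_root_even; lia.
  by apply: F32_numer_root_odd; lia.
- rewrite cat_uniq; apply/and3P; split.
  + rewrite map_inj_uniq ?iota_uniq // => a b /oppr_inj/eqP.
    by rewrite eqr_nat => /eqP; lia.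
  + apply/hasPn => x /mapP[i _ ->]; apply/mapP => -[j _ /eqP].
    rewrite two_c -subr_eq0 opprK -addrA addrC -!natrD subr_eq0 eqr_nat.
    by move=> /eqP; lia.
  + rewrite map_inj_uniq ?iota_uniq // => a b /addrI/eqP.
    by rewrite eqr_nat => /eqP; lia.
- rewrite size_cat !size_map size_iota.
  by apply: leq_trans size_F32_numer _; lia.
Qed.

End OddRoots.
End F32Numerator.

Lemma F32_trunc_mul_poch (F : numFieldType) m (beta c : F) :
  poch (beta / 2 - m%:R) (2 * m).+1 != 0 ->
  F32_trunc (- ((2 * m).+1)%:R) beta c (2 * c) (beta / 2 - m%:R) 1 (2 * m).+1 *
    poch (beta / 2 - m%:R) (2 * m).+1 = (F32_numer m c).[beta].
Proof.
set e := beta / 2 - m%:R => e_neq0.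
rewrite /F32_trunc horner_F32_numer mulr_suml; apply: eq_bigr => n _.
have le_nN : (n <= (2 * m).+1)%N by rewrite -ltnS.
have e_split : poch e (2 * m).+1 = poch e n * poch (e + n%:R) ((2 * m).+1 - n).
  by rewrite -pochD subnKC.
have en_neq0 : poch e n != 0.
  by move: e_neq0; rewrite e_split mulf_eq0 negb_or => /andP[].
have fact_neq0 : n`!%:R != 0 :> F by rewrite pnatr_eq0 -lt0n fact_gt0.
rewrite e_split /F32_numer_coef poch_opp_nat -bin_ffact natrM.
rewrite expr1n mulr1 invfM.
(* (2c)_n may vanish: hiding its inverse keeps field from requiring it. *)
set D := (poch (2 * c) n)^-1; field.
by rewrite en_neq0 fact_neq0.
Qed.

Theorem mainTheorem2 (R : realType) (m k : nat) (beta : R[i]) :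
  (0 < m)%N -> (0 < k)%N ->
  ~ in_Z0minus beta ->
  ~ in_Z0minus (beta / 2 - m%:R) ->
  F32_trunc (- (2 * m + 1)%:R) beta (- (m + k)%:R - 2^-1)
            (- (2 * m + 2 * k + 1)%:R) (beta / 2 - m%:R) 1 (2 * m + 1) = 0.
Proof.
move=> _ k_gt0 _ e_notZ0.
set c : R[i] := - (m + k)%:R - 2^-1.
have two_c : 2 * c = - ((2 * (m + k)).+1)%:R.
  by rewrite /c -[(2 * (m + k)).+1%:R]natr1 natrM natrD; field.
have -> : - (2 * m + 2 * k + 1)%:R = 2 * c.
  by rewrite two_c; congr (- _%:R); lia.
have e_neq0 := poch_neq0 (2 * m).+1 e_notZ0.
apply: (mulIf e_neq0); rewrite mul0r addn1 F32_trunc_mul_poch //.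
have lt_m_mk : (m < m + k)%N by rewrite -addn1 leq_add2l.
by rewrite (F32_numer_eq0 lt_m_mk two_c) horner0.
Qed.
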